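(* Let $1\leq r\leq n$, give the variables $x_1,\dots,x_n$ of $\mathbb{C}^n$ the weights $(w_1,\dots,w_r,0,\dots,0)$ with $w_1,\dots,w_r>0$, and let $f\in \mathbb{C}\{x_{r+1},\dots,x_n\}[x_1,\dots,x_r]$ be a quasihomogeneous polynomial of strictly positive weight $\mathrm{wt}(f)>0$. Then for every integer $p>0$ and every non-zero quasihomogeneous logarithmic $p$-form $\omega$ (logarithmic with respect to $f$), one has $\mathrm{wt}(\omega)>-\mathrm{wt}(f)$.
   Context: Weights: an element $g\in \mathbb{C}\{x_{r+1},\dots,x_n\}[x_1,\dots,x_r]$ is quasihomogeneous of weight $d$ if it is a sum of terms $c(x_{r+1},\dots,x_n)\,x_1^{a_1}\cdots x_r^{a_r}$ with $\sum_{i=1}^r a_iw_i=d$; the variables $x_{r+1},\dots,x_n$ have weight $0$. We set $\mathrm{wt}(dx_i)=w_i$ for $i\le r$ and $\mathrm{wt}(dx_i)=0$ for $i>r$; a holomorphic $p$-form $\sum_I g_I\,dx_{i_1}\wedge\cdots\wedge dx_{i_p}$ is quasihomogeneous of weight $d$ if each $g_I$ is quasihomogeneous and $\mathrm{wt}(g_I)+\sum_{k}\mathrm{wt}(dx_{i_k})=d$ for all nonzero terms. A germ at $0$ of meromorphic $p$-form $\omega$ is logarithmic (with respect to $f$) if $f\omega$ and $f\,d\omega$ are holomorphic; it is quasihomogeneous if the holomorphic form $f\omega$ is quasihomogeneous, and then $\mathrm{wt}(\omega):=\mathrm{wt}(f\omega)-\mathrm{wt}(f)$. *)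

From HB Require Import structures.
From mathcomp Require Import all_boot all_order all_algebra.
From mathcomp Require Import reals complex.
Set Implicit Arguments. Unset Strict Implicit. Unset Printing Implicit Defensive.
Import Order.TTheory GRing.Theory Num.Theory.
Local Open Scope ring_scope.

(* Multi-indices on the variables x_1..x_n (indexed by 'I_n, x_{i+1} <-> i). *)
Definition midx (n : nat) := {ffun 'I_n -> nat}.
Definition mdeg n (a : midx n) : nat := (\sum_i a i)%N.

Definition series (R : realType) (n : nat) := midx n -> R[i].

(* Convergent power series = germs at 0 of holomorphic functions:
   coefficients satisfy a geometric bound |a_alpha| <= M rho^|alpha|. *)
Definition holo (R : realType) n (a : series R n) : Prop :=
  exists (M rho : R), 0 < rho /\
    forall al : midx n, `|a al| <= ((M * rho ^+ mdeg al)%:C)%C.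

Definition nonzero_series (R : realType) n (a : series R n) : Prop :=
  exists al, a al != 0.

Definition smul (R : realType) n (a b : series R n) : series R n :=
  fun g => \sum_(al : {ffun 'I_n -> 'I_(mdeg g).+1} | [forall i, (al i <= g i)%N])
     a [ffun i => nat_of_ord (al i)] * b [ffun i => (g i - al i)%N].

Definition sderiv (R : realType) n (j : 'I_n) (a : series R n) : series R n :=
  fun al => (al j).+1%:R * a [ffun i => if i == j then (al i).+1 else al i].

(* f lies in C{x_{r+1},...,x_n}[x_1,...,x_r]: bounded degree in x_1..x_r. *)
Definition poly_first (R : realType) n (r : nat) (a : series R n) : Prop :=
  exists N : nat, forall al : midx n, a al != 0 ->
    forall i : 'I_n, (i < r)%N -> (al i <= N)%N.

Definition mwt (R : realType) n (w : 'I_n -> R) (al : midx n) : R :=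
  \sum_i (al i)%:R * w i.

Definition quasihom (R : realType) n (w : 'I_n -> R) (a : series R n) (d : R) : Prop :=
  forall al, a al != 0 -> mwt w al = d.

(* Forms: the coefficient of dx_I (I increasing set of indices). *)
Definition cform (R : realType) n := {set 'I_n} -> series R n.

Definition holo_form (R : realType) n (p : nat) (th : cform R n) : Prop :=
  (forall I, holo (th I)) /\ (forall I al, th I al != 0 -> #|I| = p).

Definition nonzero_form (R : realType) n (th : cform R n) : Prop :=
  exists I al, th I al != 0.

Definition quasihom_form (R : realType) n (w : 'I_n -> R) (th : cform R n) (d : R) : Prop :=
  forall I al, th I al != 0 -> mwt w al + \sum_(i in I) w i = d.

Definition fmul (R : realType) n (a : series R n) (th : cform R n) : cform R n :=
  fun I => smul a (th I).

Definition fsub (R : realType) n (th th' : cform R n) : cform R n :=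
  fun I al => th I al - th' I al.

(* sign of dx_j /\ dx_{J \ j} = sign * dx_J *)
Definition wsign (R : realType) n (J : {set 'I_n}) (j : 'I_n) : R[i] :=
  (-1) ^+ #|[set i in J | (i < j)%N]|.

Definition dform (R : realType) n (th : cform R n) : cform R n :=
  fun J al => \sum_(j in J) wsign R J j * sderiv j (th (J :\ j)) al.

Definition dwedge (R : realType) n (a : series R n) (th : cform R n) : cform R n :=
  fun J al => \sum_(j in J) wsign R J j * smul (sderiv j a) (th (J :\ j)) al.

(* A meromorphic p-form omega is represented as eta / g with eta a holomorphic
   p-form and g a nonzero holomorphic germ.
   d(eta/g) = (g d eta - dg /\ eta) / g^2.
   omega is logarithmic w.r.t. f iff f*omega and f*d omega are holomorphic. *)
Definition logarithmic (R : realType) n (f : series R n) (p : nat)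
    (eta : cform R n) (g : series R n) : Prop :=
  (exists th : cform R n, holo_form p th /\ fmul f eta = fmul g th) /\
  (exists xi : cform R n, holo_form p.+1 xi /\
     fmul f (fsub (fmul g (dform eta)) (dwedge g eta)) = fmul (smul g g) xi).

From HB Require Import structures.
From mathcomp Require Import all_boot all_order all_algebra.
From mathcomp Require Import reals complex.
From mathcomp Require Import zify lra.
From Stdlib Require Import Classical FunctionalExtensionality.
From Stdlib Require Wf_nat.
Set Implicit Arguments. Unset Strict Implicit. Unset Printing Implicit Defensive.
Import Order.TTheory GRing.Theory Num.Theory.
Local Open Scope ring_scope.

(* Write [th = f * omega], quasihomogeneous of weight [e = wt omega + wt f], and
   [xi = f * d omega], holomorphic since [omega] is logarithmic. Clearing the
   denominators in the ring of power series, an integral domain, gives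
   [f * xi = f * d th - df /\ th]. All weights are nonnegative, so if [e <= 0]
   then [th] involves no variable [x_j] and no differential [dx_j] of positive
   weight. As [wt f > 0], [f] depends on such an [x_j]; for [th_I <> 0] the
   [dx_j /\ dx_I]-component of [f * xi] is then [-+ (df/dx_j) * th_I], a nonzero
   series of weight [d - w_j + wt th_I < d], whereas every nonzero coefficient of
   [f * xi] has weight at least [d]. *)

Section MultiIndex.
Variable n : nat.
Implicit Types (g x y z : midx n).

Definition mle x y : bool := [forall i, x i <= y i]%N.
Definition madd x y : midx n := [ffun i => x i + y i]%N.
Definition msub x y : midx n := [ffun i => x i - y i]%N.
Definition mdelta (j : 'I_n) : midx n := [ffun i => nat_of_bool (i == j)].

Definition mcube (M : nat) : seq (midx n) :=
  map (fun c : {ffun 'I_n -> 'I_M.+1} => [ffun i => nat_of_ord (c i)])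
      (enum {: {ffun 'I_n -> 'I_M.+1}}).
Definition mbox g : seq (midx n) := [seq x <- mcube (mdeg g) | mle x g].

Lemma mleP x y : reflect (forall i, x i <= y i)%N (mle x y).
Proof. exact: forallP. Qed.

Lemma mle_trans y x z : mle x y -> mle y z -> mle x z.
Proof. by move=> /mleP lxy /mleP lyz; apply/mleP => i; apply: leq_trans (lxy i) (lyz i). Qed.

Lemma leq_mdeg g i : (g i <= mdeg g)%N.
Proof. by rewrite /mdeg (bigD1 i) //= leq_addr. Qed.

Lemma mdeg_madd x y : mdeg (madd x y) = (mdeg x + mdeg y)%N.
Proof. by rewrite /mdeg -big_split; apply: eq_bigr => i _; rewrite ffunE. Qed.

Lemma maddKn x y : msub (madd x y) x = y.
Proof. by apply/ffunP => i; rewrite !ffunE addKn. Qed.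

Lemma mle_maddr x y : mle x (madd x y).
Proof. by apply/mleP => i; rewrite ffunE leq_addr. Qed.

Lemma maddnK x y : msub (madd x y) y = x.
Proof. by apply/ffunP => i; rewrite !ffunE addnK. Qed.

Lemma msubnK x g : mle x g -> madd (msub g x) x = g.
Proof. by move/mleP=> le_xg; apply/ffunP => i; rewrite !ffunE subnK. Qed.

Lemma msubKC x g : mle x g -> madd x (msub g x) = g.
Proof. by move/mleP=> le_xg; apply/ffunP => i; rewrite !ffunE subnKC. Qed.

Lemma msubKn x g : mle x g -> msub g (msub g x) = x.
Proof. by move/mleP=> le_xg; apply/ffunP => i; rewrite !ffunE subKn. Qed.

Lemma mle_msub g x : mle (msub g x) g.
Proof. by apply/mleP => i; rewrite ffunE leq_subr. Qed.

Lemma mle_mdelta j x : mle (mdelta j) x = (0 < x j)%N.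
Proof.
apply/mleP/idP => [/(_ j)|xj_gt0 i]; first by rewrite ffunE eqxx.
by rewrite ffunE; case: eqP => [->|].
Qed.

Lemma mem_mcube M x : (x \in mcube M) = [forall i, x i <= M]%N.
Proof.
apply/mapP/forallP => [[c _ ->] i|le_xM].
  by rewrite ffunE -ltnS ltn_ord.
exists [ffun i => (inord (x i) : 'I_M.+1)]; first by rewrite mem_enum.
by apply/ffunP => i; rewrite !ffunE inordK // ltnS.
Qed.

Lemma uniq_mcube M : uniq (mcube M).
Proof.
rewrite map_inj_uniq ?enum_uniq // => c c' /ffunP eq_cc'.
by apply/ffunP => i; apply: val_inj; have := eq_cc' i; rewrite !ffunE.
Qed.

Lemma mem_mbox g x : (x \in mbox g) = mle x g.
Proof.
rewrite mem_filter mem_mcube andb_idr // => /mleP le_xg.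
by apply/forallP => i; apply: leq_trans (leq_mdeg g i).
Qed.

Lemma uniq_mbox g : uniq (mbox g).
Proof. exact/filter_uniq/uniq_mcube. Qed.

Section BigMbox.
Variables (V : nmodType) (F : midx n -> V).

Lemma big_mboxE s g : uniq s -> s =i [pred x | mle x g] ->
  \sum_(x <- s) F x = \sum_(x <- mbox g) F x.
Proof.
move=> uniq_s mem_s; apply/perm_big/uniq_perm; rewrite ?uniq_mbox // => x.
by rewrite mem_s mem_mbox.
Qed.

Lemma big_mbox_msub g : \sum_(x <- mbox g) F x = \sum_(x <- mbox g) F (msub g x).
Proof.
rewrite -(big_map (msub g) xpredT); symmetry; apply: big_mboxE => [|x].
  rewrite map_inj_in_uniq ?uniq_mbox // => x y; rewrite !mem_mbox => le_xg le_yg eq_xy.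
  by rewrite -(msubKn le_xg) -(msubKn le_yg) eq_xy.
apply/mapP/idP => [[y _ ->]|le_xg]; first exact: mle_msub.
by exists (msub g x); rewrite ?mem_mbox ?mle_msub ?msubKn.
Qed.

Lemma big_mbox_le g z : mle z g ->
  \sum_(x <- mbox z) F x = \sum_(x <- mbox g | mle x z) F x.
Proof.
move=> le_zg; rewrite -[RHS]big_filter; symmetry; apply: big_mboxE => [|x].
  exact/filter_uniq/uniq_mbox.
by rewrite mem_filter mem_mbox /= andb_idr // => /mle_trans; apply.
Qed.

Lemma big_mbox_shift g y : mle y g ->
  \sum_(x <- mbox (msub g y)) F x = \sum_(x <- mbox g | mle y x) F (msub x y).
Proof.
move=> le_yg; rewrite -[RHS]big_filter -[RHS](big_map (msub^~ y) xpredT).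
symmetry; apply: big_mboxE => [|x].
  rewrite map_inj_in_uniq ?(filter_uniq _ (uniq_mbox g)) // => x z.
  rewrite !mem_filter => /andP[le_yx _] /andP[le_yz _] eq_xz.
  by rewrite -(msubKC le_yx) -(msubKC le_yz) eq_xz.
apply/mapP/idP => [[z]|/mleP le_x].
  rewrite mem_filter mem_mbox => /andP[/mleP le_yz /mleP le_zg] ->.
  by apply/mleP => i; rewrite !ffunE leq_sub2r.
exists (madd y x); last by rewrite maddKn.
rewrite mem_filter mem_mbox mle_maddr; apply/mleP => i; move/mleP: le_yg => /(_ i).
by have := le_x i; rewrite !ffunE; lia.
Qed.

End BigMbox.

End MultiIndex.

Section SeriesRing.
Variables (R : realType) (n : nat).
Implicit Types (a b c : series R n) (g x y z : midx n).

Lemma smulE a b g : smul a b g = \sum_(x <- mbox g) a x * b (msub g x).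
Proof.
rewrite /smul /mbox big_filter /mcube big_map big_enum_cond /=.
apply: eq_big => [c|c _]; first by apply: eq_forallb => i; rewrite ffunE.
by congr (_ * b _); apply/ffunP => i; rewrite !ffunE.
Qed.

Lemma sderivE j a g : sderiv j a g = (g j).+1%:R * a (madd g (mdelta j)).
Proof.
rewrite /sderiv; congr (_ * a _); apply/ffunP => i.
by rewrite !ffunE; case: eqP; rewrite ?addn1 ?addn0.
Qed.

Lemma smulC a b : smul a b = smul b a.
Proof.
apply: functional_extensionality => g; rewrite !smulE big_mbox_msub big_seq [RHS]big_seq.
by apply: eq_bigr => x; rewrite mem_mbox => le_xg; rewrite msubKn // mulrC.
Qed.

Lemma smulA a b c : smul a (smul b c) = smul (smul a b) c.
Proof.
apply: functional_extensionality => g; rewrite !smulE.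
transitivity (\sum_(x <- mbox g) \sum_(z <- mbox g | mle x z)
                a x * (b (msub z x) * c (msub g z))).
  rewrite !big_seq; apply: eq_bigr => x; rewrite mem_mbox => le_xg.
  rewrite smulE (big_mbox_shift _ le_xg) mulr_sumr big_seq_cond [RHS]big_seq_cond.
  apply: eq_bigr => z /andP[_ /mleP le_xz]; congr (_ * (_ * c _)).
  by apply/ffunP => i; rewrite !ffunE; have := le_xz i; lia.
rewrite (exchange_big_dep xpredT) //= big_seq [RHS]big_seq.
apply: eq_bigr => z; rewrite mem_mbox => le_zg.
by rewrite smulE (big_mbox_le _ le_zg) mulr_suml; apply: eq_bigr => x _; rewrite mulrA.
Qed.

Lemma smulCA a b c : smul a (smul b c) = smul b (smul a c).
Proof. by rewrite smulA (smulC a b) -smulA. Qed.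

Lemma smulBr a b c :
  smul a (fun x => b x - c x) = (fun x => smul a b x - smul a c x).
Proof.
apply: functional_extensionality => g; rewrite !smulE -sumrB.
by apply: eq_bigr => x _; rewrite mulrBr.
Qed.

Lemma smul_sumr (I : finType) (P : pred I) (k : I -> R[i]) (B : I -> series R n) a :
  smul a (fun x => \sum_(i | P i) k i * B i x) =
  (fun x => \sum_(i | P i) k i * smul a (B i) x).
Proof.
apply: functional_extensionality => g; rewrite smulE.
under eq_bigr do rewrite mulr_sumr.
rewrite exchange_big /=; apply: eq_bigr => i _.
by rewrite smulE mulr_sumr; apply: eq_bigr => x _; rewrite mulrCA.
Qed.

Lemma smul_eq0r a b g : (forall x, b x = 0) -> smul a b g = 0.
Proof. by move=> b0; rewrite smulE big1 // => x _; rewrite b0 mulr0. Qed.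

Lemma smul_neq0_coef a b g : smul a b g != 0 ->
  exists x, [/\ mle x g, a x != 0 & b (msub g x) != 0].
Proof.
rewrite smulE => /eqP nz; apply: NNPP => no_split; apply: nz.
rewrite big1_seq // => x; rewrite mem_mbox => /andP[_ le_xg].
have [->|ax] := eqVneq (a x) 0; first by rewrite mul0r.
have [->|bx] := eqVneq (b (msub g x)) 0; first by rewrite mulr0.
by case: no_split; exists x.
Qed.

Lemma smul_sderivl j a b g (G := madd g (mdelta j)) :
  smul (sderiv j a) b g = \sum_(x <- mbox G) (x j)%:R * (a x * b (msub G x)).
Proof.
have le_dG : mle (mdelta j) G by rewrite mle_mdelta !ffunE eqxx addn1.
rewrite [RHS](bigID (mle (mdelta j))) /= [X in _ = _ + X]big1 => [|x]; last first.
  by rewrite mle_mdelta -eqn0Ngt => /eqP ->; rewrite mul0r.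
rewrite addr0 smulE -{1}(maddnK g (mdelta j)) -/G (big_mbox_shift _ le_dG).
rewrite big_seq_cond [RHS]big_seq_cond; apply: eq_bigr => x.
rewrite mem_mbox => /andP[/mleP le_xG le_dx]; rewrite sderivE msubnK // -mulrA.
move: le_dx; rewrite mle_mdelta => xj_gt0.
congr (_%:R * (_ * b _)); first by rewrite !ffunE eqxx subn1 prednK.
apply/ffunP => i; rewrite !ffunE; have := le_xG i; rewrite !ffunE.
by case: eqP => [->|_]; lia.
Qed.

Lemma smul_sderivr j a b g (G := madd g (mdelta j)) :
  smul a (sderiv j b) g = \sum_(x <- mbox G) (G j - x j)%:R * (a x * b (msub G x)).
Proof.
rewrite smulC smul_sderivl -/G big_mbox_msub big_seq [RHS]big_seq.
apply: eq_bigr => x; rewrite mem_mbox => le_xG.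
by rewrite msubKn // ffunE [b _ * _]mulrC.
Qed.

Lemma sderiv_smul j a b g :
  sderiv j (smul a b) g = smul (sderiv j a) b g + smul a (sderiv j b) g.
Proof.
rewrite smul_sderivl smul_sderivr -big_split /= sderivE smulE mulr_sumr.
rewrite big_seq [RHS]big_seq; apply: eq_bigr => x; rewrite mem_mbox => /mleP le_xG.
by rewrite -mulrDl -natrD subnKC ?le_xG // !ffunE eqxx addn1.
Qed.

End SeriesRing.

Lemma ex_argmin (T : Type) (P : T -> Prop) (m : T -> nat) :
  (exists x, P x) -> exists x, P x /\ forall y, P y -> (m x <= m y)%N.
Proof.
move=> [x Px]; pose Q k := exists y, P y /\ m y = k.
have [k [[[y [Py <-]] min_k] _]] :=
  Wf_nat.dec_inh_nat_subset_has_unique_least_element Q (fun k => classic (Q k))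
    (ex_intro _ (m x) (ex_intro _ x (conj Px erefl))).
by exists y; split => // z Pz; apply/ssrnat.leP/min_k; exists z.
Qed.

Lemma digits_inj B m (u v : 'I_m -> nat) :
  (forall i, u i < B)%N -> (forall i, v i < B)%N ->
  (\sum_i u i * B ^ i = \sum_i v i * B ^ i)%N -> u =1 v.
Proof.
elim: m u v => [|m IH] u v ltu ltv; first by move=> _ [].
rewrite !big_ord_recl !expn0 !muln1 => eq_uv.
have tailE (t : 'I_m.+1 -> nat) : (\sum_(i < m) t (lift ord0 i) * B ^ bump 0 i =
    (\sum_(i < m) t (lift ord0 i) * B ^ i) * B)%N.
  by rewrite big_distrl; apply: eq_bigr => i _; rewrite expnS mulnCA mulnC.
rewrite !tailE in eq_uv.
have eq_uv0 : u ord0 = v ord0.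
  have := congr1 (modn^~ B) eq_uv; rewrite /= ![(u _ + _)%N]addnC ![(v _ + _)%N]addnC.
  by rewrite !modnMDl !modn_small.
have B_gt0 : (0 < B)%N by apply: leq_ltn_trans (ltu ord0).
move: eq_uv; rewrite eq_uv0 => /addnI /eqP; rewrite eqn_pmul2r // => /eqP eq_tail.
move=> i; case: (unliftP ord0 i) => [k|] -> //.
exact: (IH (u \o lift ord0) (v \o lift ord0) (fun k => ltu _) (fun k => ltv _) eq_tail).
Qed.

Section Domain.
Variables (R : realType) (n : nat).
Implicit Types (a b c : series R n) (x y : midx n).

Definition mkey B x : nat := (\sum_i x i * B ^ i)%N.

Lemma mkey_madd B x y : mkey B (madd x y) = (mkey B x + mkey B y)%N.
Proof. by rewrite /mkey -big_split; apply: eq_bigr => i _; rewrite ffunE mulnDl. Qed.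

Lemma mkey_inj B x y : (forall i, x i < B)%N -> (forall i, y i < B)%N ->
  mkey B x = mkey B y -> x = y.
Proof. by move=> ltx lty eq_xy; apply/ffunP; apply: digits_inj ltx lty eq_xy. Qed.

Lemma smul_neq0 a b :
  nonzero_series a -> nonzero_series b -> nonzero_series (smul a b).
Proof.
(* [al] and [be] are the least monomials of [a] and [b] for the order "degree, then
   [mkey B]"; [mkey B] is injective on monomials of these degrees, so [x^(al + be)]
   arises in [a * b] only as [x^al * x^be]. *)
move=> nz_a nz_b; have [xa [axa min_a]] := ex_argmin (@mdeg n) nz_a.
have [xb [bxb min_b]] := ex_argmin (@mdeg n) nz_b.
pose B := (mdeg xa + mdeg xb).+1.
have [al [[a_al deg_al] key_al]] := ex_argmin (mkey B)
  (ex_intro (fun x => a x != 0 /\ mdeg x = mdeg xa) xa (conj axa erefl)).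
have [be [[b_be deg_be] key_be]] := ex_argmin (mkey B)
  (ex_intro (fun x => b x != 0 /\ mdeg x = mdeg xb) xb (conj bxb erefl)).
exists (madd al be); rewrite smulE (bigD1_seq al) ?mem_mbox ?mle_maddr ?uniq_mbox //=.
rewrite maddKn big1_seq ?addr0 ?mulf_neq0 // => x /andP[ne_x_al]; rewrite mem_mbox => le_x.
set y := msub _ x.
have [->|ax] := eqVneq (a x) 0; first by rewrite mul0r.
have [->|by_] := eqVneq (b y) 0; first by rewrite mulr0.
have eq_sum : madd x y = madd al be by rewrite msubKC.
have := congr1 (@mdeg n) eq_sum; rewrite !mdeg_madd deg_al deg_be => deg_sum.
have := min_a _ ax; have := min_b _ by_ => deg_y deg_x.
have {}deg_x : mdeg x = mdeg xa by lia.
have {}deg_y : mdeg y = mdeg xb by lia.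
have := congr1 (mkey B) eq_sum; rewrite !mkey_madd => key_sum.
have := key_al _ (conj ax deg_x); have := key_be _ (conj by_ deg_y) => key_y key_x.
case/eqP: ne_x_al; apply: (mkey_inj (B := B)); last by lia.
all: by move=> i; apply: leq_ltn_trans (leq_mdeg _ i) _; rewrite ?deg_x ?deg_al /B; lia.
Qed.

Lemma smulI a b c : nonzero_series a -> smul a b = smul a c -> b = c.
Proof.
move=> nz_a eq_bc; apply: functional_extensionality => x.
apply/eqP; rewrite -subr_eq0; apply/negPn/negP => ne_bc.
have [y] := smul_neq0 nz_a (ex_intro (fun x => b x - c x != 0) x ne_bc).
by rewrite smulBr eq_bc subrr eqxx.
Qed.

End Domain.

Section Forms.
Variables (R : realType) (n : nat).
Implicit Types (a b f g : series R n) (th et xi : cform R n).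

Definition fadd th th' : cform R n := fun I x => th I x + th' I x.

Lemma cform_ext th th' : (forall I x, th I x = th' I x) -> th = th'.
Proof.
by move=> eq_th; do 2![apply: functional_extensionality => ?]; apply: eq_th.
Qed.

Lemma fmulA a b th : fmul a (fmul b th) = fmul (smul a b) th.
Proof. by apply: functional_extensionality => I; apply: smulA. Qed.

Lemma fmulCA a b th : fmul a (fmul b th) = fmul b (fmul a th).
Proof. by apply: functional_extensionality => I; apply: smulCA. Qed.

Lemma fmulBr a th th' : fmul a (fsub th th') = fsub (fmul a th) (fmul a th').
Proof. by apply: functional_extensionality => I; apply: smulBr. Qed.

Lemma fmul_dwedge a b th : fmul a (dwedge b th) = dwedge b (fmul a th).
Proof.
apply: functional_extensionality => J; rewrite /fmul /dwedge smul_sumr.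
by apply: functional_extensionality => x; apply: eq_bigr => j _; rewrite smulCA.
Qed.

Lemma dform_fmul a th : dform (fmul a th) = fadd (dwedge a th) (fmul a (dform th)).
Proof.
apply: cform_ext => J x; rewrite /fadd /fmul /dform smul_sumr -big_split /=.
by apply: eq_bigr => j _; rewrite sderiv_smul mulrDr.
Qed.

Lemma fmulI g th th' : nonzero_series g -> fmul g th = fmul g th' -> th = th'.
Proof.
move=> nz_g eq_th; apply: functional_extensionality => I.
exact: smulI nz_g (congr1 (fun t => t I) eq_th).
Qed.

Lemma fadd_fsub th1 th2 th3 th4 :
  fadd th1 th2 = fadd th3 th4 -> fsub th2 th3 = fsub th4 th1.
Proof.
move=> eq_add; apply: cform_ext => I x; rewrite /fsub.
have := congr1 (fun t => t I x) eq_add; rewrite /fadd => eq_sum.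
have -> : th2 I x = th3 I x + th4 I x - th1 I x by rewrite -eq_sum addrC addKr.
by rewrite addrC addrA addKr.
Qed.

(* Hypotheses and conclusion all say [f * d omega = xi] for [omega = et/g = th/f],
   with denominators cleared. *)
Lemma logarithmic_dform f g et th xi :
  nonzero_series g -> fmul f et = fmul g th ->
  fmul f (fsub (fmul g (dform et)) (dwedge g et)) = fmul (smul g g) xi ->
  fmul f xi = fsub (fmul f (dform th)) (dwedge f th).
Proof.
move=> nz_g eq_fg log_xi.
have leibniz : fsub (fmul f (dform et)) (dwedge g th) =
               fsub (fmul g (dform th)) (dwedge f et).
  by apply: fadd_fsub; rewrite -!dform_fmul eq_fg.
have g_xi : fmul g xi = fsub (fmul g (dform th)) (dwedge f et).
  apply: (fmulI nz_g); rewrite fmulA -log_xi -leibniz !fmulBr fmulCA !fmul_dwedge.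
  by rewrite eq_fg.
apply: (fmulI nz_g); rewrite fmulCA g_xi !fmulBr fmulCA !fmul_dwedge eq_fg.
by [].
Qed.

Lemma fsub_dform_dwedge_setU1 f th (j : 'I_n) (I : {set 'I_n}) : j \notin I ->
  (forall K : {set 'I_n}, j \in K -> forall x, th K x = 0) ->
  (forall x, sderiv j (th I) x = 0) ->
  forall x, fsub (fmul f (dform th)) (dwedge f th) (j |: I) x =
            - wsign R (j |: I) j * smul (sderiv j f) (th I) x.
Proof.
move=> jI th_j0 dth_I0 x; have JjE : (j |: I) :\ j = I by rewrite setU1K.
have th_Jk0 k : k \in (j |: I) -> k != j -> forall y, th ((j |: I) :\ k) y = 0.
  by move=> kJ kj; apply: th_j0; rewrite in_setD1 eq_sym kj setU11.
rewrite /fsub /fmul smul_eq0r => [|y]; last first.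
  rewrite /dform big1 // => k kJ.
  have [->|kj] := eqVneq k j; first by rewrite JjE dth_I0 mulr0.
  by rewrite sderivE th_Jk0 ?mulr0.
rewrite /dwedge (bigD1 j) ?setU11 //= big1 => [|k /andP[kJ kj]]; last first.
  by rewrite smul_eq0r ?mulr0 // => y; apply: th_Jk0.
by rewrite JjE addr0 sub0r mulNr.
Qed.

End Forms.

Section Weights.
Variables (R : realType) (n : nat) (w : 'I_n -> R).
Hypothesis w_ge0 : forall i, 0 <= w i.
Implicit Types (a b : series R n) (x y : midx n).

Lemma mwt_madd x y : mwt w (madd x y) = mwt w x + mwt w y.
Proof. by rewrite /mwt -big_split; apply: eq_bigr => i _; rewrite ffunE natrD mulrDl. Qed.

Lemma mwt_mdelta j : mwt w (mdelta j) = w j.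
Proof.
rewrite /mwt (bigD1 j) //= ffunE eqxx mul1r big1 ?addr0 // => i /negbTE ij.
by rewrite ffunE ij mul0r.
Qed.

Lemma mwt_ge0 x : 0 <= mwt w x.
Proof. by apply: sumr_ge0 => i _; rewrite mulr_ge0 ?ler0n. Qed.

Lemma quasihom_smul a b da db :
  quasihom w a da -> quasihom w b db -> quasihom w (smul a b) (da + db).
Proof.
move=> qa qb x /smul_neq0_coef [y [le_yx ay bxy]].
by rewrite -(msubKC le_yx) mwt_madd qa // qb.
Qed.

Lemma quasihom_sderiv j a d : quasihom w a d -> quasihom w (sderiv j a) (d - w j).
Proof.
move=> qa x; rewrite sderivE mulf_eq0 negb_or => /andP[_ /qa].
by rewrite mwt_madd mwt_mdelta => <-; rewrite addrK.
Qed.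

Lemma quasihom_form_coef th e (I : {set 'I_n}) :
  quasihom_form w th e -> quasihom w (th I) (e - \sum_(i in I) w i).
Proof. by move=> qth x /qth <-; rewrite addrK. Qed.

Lemma quasihom_lt0 a d : quasihom w a d -> d < 0 -> forall x, a x = 0.
Proof.
move=> qa d_lt0 x; apply/eqP; apply: contraTT d_lt0 => /qa <-.
by rewrite -leNgt mwt_ge0.
Qed.

Lemma quasihom_form_eq0 th e j (K : {set 'I_n}) :
  quasihom_form w th e -> e <= 0 -> 0 < w j -> j \in K -> forall x, th K x = 0.
Proof.
move=> qth e_le0 wj_gt0 jK; apply: (quasihom_lt0 (quasihom_form_coef (I := K) qth)).
have : w j <= \sum_(i in K) w i by rewrite (bigD1 j) //= lerDl sumr_ge0.
by lra.
Qed.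

Lemma quasihom_form_sderiv_eq0 th e j :
  quasihom_form w th e -> e <= 0 -> 0 < w j ->
  forall (I : {set 'I_n}) x, sderiv j (th I) x = 0.
Proof.
move=> qth e_le0 wj_gt0 I.
apply: (quasihom_lt0 (quasihom_sderiv (j := j) (quasihom_form_coef (I := I) qth))).
have : 0 <= \sum_(i in I) w i by apply: sumr_ge0.
by lra.
Qed.

Lemma quasihom_le_mwt_smul a b d x :
  quasihom w a d -> smul a b x != 0 -> d <= mwt w x.
Proof.
move=> qa /smul_neq0_coef [y [le_yx ay _]].
by rewrite -(msubKC le_yx) mwt_madd qa // lerDl mwt_ge0.
Qed.

Lemma quasihom_sderiv_neq0 a d : quasihom w a d -> 0 < d -> nonzero_series a ->
  exists j, 0 < w j /\ nonzero_series (sderiv j a).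
Proof.
move=> qa d_gt0 [x ax].
have mwt_neq0 : mwt w x <> 0 by rewrite qa //; apply/eqP; rewrite gt_eqF.
have [j /= term_gt0] :=
  psumr_neq0P (fun j _ => mulr_ge0 (ler0n _ (x j)) (w_ge0 j)) mwt_neq0.
have xj_gt0 : (0 < x j)%N.
  by rewrite lt0n; apply: contraTneq term_gt0 => ->; rewrite mul0r ltxx.
exists j; split.
  by rewrite lt_def w_ge0 andbT; apply: contraTneq term_gt0 => ->; rewrite mulr0 ltxx.
exists (msub x (mdelta j)).
by rewrite sderivE msubnK ?mle_mdelta // mulf_neq0 ?pnatr_eq0.
Qed.

End Weights.

Lemma nonzero_form_fmul_eq (R : realType) n (f g : series R n) (et th : cform R n) :
  nonzero_series f -> nonzero_form et -> fmul f et = fmul g th -> nonzero_form th.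
Proof.
move=> nz_f [I [x et_Ix]] eq_fg; exists I.
have : nonzero_series (fmul f et I) := smul_neq0 nz_f (ex_intro _ x et_Ix).
rewrite eq_fg => -[y /smul_neq0_coef[z [_ _ th_Iz]]].
by exists (msub y z).
Qed.

Theorem mainTheorem2 (R : realType) (n r : nat) (w : 'I_n -> R)
    (f : series R n) (d : R) :
  (1 <= r <= n)%N ->
  (forall i : 'I_n, (i < r)%N -> 0 < w i) ->
  (forall i : 'I_n, (r <= i)%N -> w i = 0) ->
  holo f -> poly_first r f -> nonzero_series f ->
  quasihom w f d -> 0 < d ->
  forall (p : nat) (eta : cform R n) (g : series R n) (th : cform R n) (e : R),
    (0 < p)%N ->
    holo_form p eta -> holo g -> nonzero_series g -> nonzero_form eta ->
    logarithmic f p eta g ->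
    holo_form p th -> fmul f eta = fmul g th -> quasihom_form w th e ->
    - d < e - d.
Proof.
move=> _ w_pos w_zero _ _ nz_f qf d_gt0 p eta g th e _ _ _ nz_g nz_eta
  [_ [xi [_ log_xi]]] _ eq_fg qth.
rewrite -subr_gt0 opprK subrK ltNge; apply/negP => e_le0.
have w_ge0 i : 0 <= w i by case: (ltnP i r) => [/w_pos/ltW|/w_zero ->].
have [j [wj_gt0 nz_dfj]] := quasihom_sderiv_neq0 w_ge0 qf d_gt0 nz_f.
have [I [x th_Ix]] := nonzero_form_fmul_eq nz_f nz_eta eq_fg.
have jI : j \notin I.
  apply: contraL th_Ix => jI.
  by rewrite (quasihom_form_eq0 w_ge0 qth e_le0 wj_gt0 jI) eqxx.
have [y dfj_th_y] := smul_neq0 nz_dfj (ex_intro _ x th_Ix).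
have : fmul f xi (j |: I) y != 0.
  rewrite (logarithmic_dform nz_g eq_fg log_xi) fsub_dform_dwedge_setU1 //.
  - by rewrite mulf_neq0 // oppr_eq0 expf_neq0 // oppr_eq0 oner_eq0.
  - by move=> K; apply: (quasihom_form_eq0 w_ge0 qth e_le0 wj_gt0 (K := K)).
  - exact: (quasihom_form_sderiv_eq0 w_ge0 qth e_le0 wj_gt0 I).
move/(quasihom_le_mwt_smul w_ge0 qf).
rewrite (quasihom_smul (quasihom_sderiv (j := j) qf)
                       (quasihom_form_coef (I := I) qth) dfj_th_y).
have : 0 <= \sum_(i in I) w i by apply: sumr_ge0.
by lra.
Qed.
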